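(* Let $\mathbf{C}$ be a cartesian closed category, $D$ a natural system on $\mathbf{C}$, and $D\to\mathbf{E}\xrightarrow{p}\mathbf{C}$ a linear extension of $\mathbf{C}$ by $D$. Then $D$ is a cartesian closed natural system if and only if $\mathbf{E}$ is cartesian closed and $p$ is a cartesian closed functor. Moreover, in that case, if $\mathbf{C}$ is given the structure of an $S$-sorted CCC $\iota:\mathbf{CFam}_S\to\mathbf{C}$, then there exists $\tilde\iota:\mathbf{CFam}_S\to\mathbf{E}$ making $\mathbf{E}$ an $S$-sorted CCC such that $p$ is a morphism of $S$-sorted CCCs.
   Context: The category of factorizations $F\mathbf{C}$ has as objects the morphisms of $\mathbf{C}$; a morphism $(a,b):f\to g$ from $f:A\to B$ to $g:A'\to B'$ is a pair $a:A'\to A$, $b:B\to B'$ with $bfa=g$. A natural system on $\mathbf{C}$ is a functor $D:F\mathbf{C}\to\mathbf{Ab}$; write $D_f=D(f)$, $a_*=D(1,a):D_f\to D_{af}$, $a^*=D(a,1):D_g\to D_{ga}$. A linear extension $D\to\mathbf{E}\xrightarrow{p}\mathbf{C}$ is a category $\mathbf{E}$ with a full, identity-on-objects functor $p$ and, for each $f$ in $\mathbf{C}$, a transitive free action $+:D_f\times p^{-1}(f)\to p^{-1}(f)$ such that $(\xi+\tilde f)\circ(\eta+\tilde g)=f_*\eta+g^*\xi+\tilde f\circ\tilde g$. $D$ is cartesian if for every $f:X\to X_1\times\dots\times X_n$ the map $D_f\to\prod_k D_{\pi_k f}$, $\xi\mapsto(\pi_{k*}\xi)_k$, is an isomorphism.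 For cartesian $D$, $g:X\to W$ and an object $Y$, $\phi_g:D_g\times D_{\pi_2}\to D_{g\times1_Y}$ is $\pi_1^*\times1$ followed by the inverse of the cartesian isomorphism $D_{g\times1_Y}\to D_{g\pi_1}\times D_{\pi_2}$. $D$ is cartesian closed if it is cartesian and for each $f:X\times Y\to Z$ the map $D_{\lambda f}\to D_f$, $\xi\mapsto\mathrm{ev}^Y_{Z*}\phi_{\lambda f}(\xi,0)$, is an isomorphism, where $\mathrm{ev}^Y_Z:Z^Y\times Y\to Z$ is evaluation and $\lambda f$ the curried morphism. $\mathsf{BiMag}_S$ is the set of formal expressions generated from the elements of $S$ and $1$ by $X\times Y$ and $Y^X$; $\mathbf{CFam}_S$ is the free cartesian closed category with object set $\mathsf{BiMag}_S$ and no generating morphisms. An $S$-sorted CCC is a CCC $\mathbf{C}$ with $\mathrm{Ob}(\mathbf{C})=\mathsf{BiMag}_S$ and a cartesian closed identity-on-objects functor $\iota:\mathbf{CFam}_S\to\mathbf{C}$; a morphism of $S$-sorted CCCs is a functor $F$ with $F\circ\iota=\iota'$. *)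

From mathcomp Require Import all_boot all_algebra.
Set Implicit Arguments.
Unset Strict Implicit.
Unset Printing Implicit Defensive.
Import GRing.Theory.
Local Open Scope ring_scope.

(* Categories with object type O (so that identity-on-objects functors *)
(* between categories with the same object type are just Hom maps).    *)
Record Category (O : Type) := {
  Hom : O -> O -> Type;
  cid : forall X, Hom X X;
  cmp : forall X Y Z, Hom Y Z -> Hom X Y -> Hom X Z;
  cmp_id_l : forall X Y (f : Hom X Y), cmp (cid Y) f = f;
  cmp_id_r : forall X Y (f : Hom X Y), cmp f (cid X) = f;
  cmp_assoc : forall X Y Z W (h : Hom Z W) (g : Hom Y Z) (f : Hom X Y),
      cmp h (cmp g f) = cmp (cmp h g) f }.
Arguments Hom {O} C X Y : rename.
Arguments cid {O} C X : rename.
Arguments cmp {O} C {X Y Z} g f : rename.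

Section Universal.
Context {O : Type} (C : Category O).

Definition is_terminal (T : O) : Prop :=
  forall X, exists! f : Hom C X T, True.

Definition is_product (X Y P : O) (q1 : Hom C P X) (q2 : Hom C P Y) : Prop :=
  forall Z (f : Hom C Z X) (g : Hom C Z Y),
    exists! h : Hom C Z P, cmp C q1 h = f /\ cmp C q2 h = g.

Definition is_nproduct (n : nat) (Xs : 'I_n -> O) (P : O)
    (pr : forall k, Hom C P (Xs k)) : Prop :=
  forall Z (fs : forall k, Hom C Z (Xs k)),
    exists! h : Hom C Z P, forall k, cmp C (pr k) h = fs k.

(* exponential diagram: Ex = Z^Y, with product (P,q1,q2) of Ex and Y and
   evaluation ev : P -> Z *)
Definition is_exponential (Y Z Ex P : O) (q1 : Hom C P Ex) (q2 : Hom C P Y)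
    (ev : Hom C P Z) : Prop :=
  @is_product Ex Y P q1 q2 /\
  forall X Q (r1 : Hom C Q X) (r2 : Hom C Q Y), @is_product X Y Q r1 r2 ->
    forall f : Hom C Q Z,
      exists! h : Hom C X Ex,
        forall m : Hom C Q P, cmp C q1 m = cmp C h r1 -> cmp C q2 m = r2 ->
          cmp C ev m = f.

Definition is_ccc : Prop :=
  (exists T, is_terminal T) /\
  (forall X Y, exists P q1 q2, @is_product X Y P q1 q2) /\
  (forall Y Z, exists Ex P q1 q2 ev, @is_exponential Y Z Ex P q1 q2 ev).

End Universal.
Arguments is_terminal {O} C T.
Arguments is_product {O} C {X Y P} q1 q2.
Arguments is_nproduct {O} C {n} Xs P pr.
Arguments is_exponential {O} C {Y Z Ex P} q1 q2 ev.
Arguments is_ccc {O} C.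

Record CCC {O : Type} (C : Category O) := {
  c_one : O;
  c_bang : forall X, Hom C X c_one;
  c_bang_uniq : forall X (f : Hom C X c_one), f = c_bang X;
  c_prod : O -> O -> O;
  c_p1 : forall X Y, Hom C (c_prod X Y) X;
  c_p2 : forall X Y, Hom C (c_prod X Y) Y;
  c_pair : forall Z X Y, Hom C Z X -> Hom C Z Y -> Hom C Z (c_prod X Y);
  c_p1_pair : forall Z X Y (f : Hom C Z X) (g : Hom C Z Y),
      cmp C (c_p1 X Y) (c_pair f g) = f;
  c_p2_pair : forall Z X Y (f : Hom C Z X) (g : Hom C Z Y),
      cmp C (c_p2 X Y) (c_pair f g) = g;
  c_pair_eta : forall Z X Y (h : Hom C Z (c_prod X Y)),
      c_pair (cmp C (c_p1 X Y) h) (cmp C (c_p2 X Y) h) = h;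
  c_exp : O -> O -> O;   (* c_exp Z Y = Z^Y *)
  c_ev : forall Y Z, Hom C (c_prod (c_exp Z Y) Y) Z;
  c_curry : forall X Y Z, Hom C (c_prod X Y) Z -> Hom C X (c_exp Z Y);
  c_beta : forall X Y Z (f : Hom C (c_prod X Y) Z),
      cmp C (c_ev Y Z) (c_pair (cmp C (c_curry f) (c_p1 X Y)) (c_p2 X Y)) = f;
  c_eta : forall X Y Z (h : Hom C X (c_exp Z Y)),
      c_curry (cmp C (c_ev Y Z) (c_pair (cmp C h (c_p1 X Y)) (c_p2 X Y))) = h }.
Arguments c_one {O C} c : rename.
Arguments c_bang {O C} c X : rename.
Arguments c_prod {O C} c X Y : rename.
Arguments c_p1 {O C} c X Y : rename.
Arguments c_p2 {O C} c X Y : rename.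
Arguments c_pair {O C} c {Z X Y} f g : rename.
Arguments c_exp {O C} c Z Y : rename.
Arguments c_ev {O C} c Y Z : rename.
Arguments c_curry {O C} c {X Y Z} f : rename.

Definition times1 {O} {C : Category O} (CC : CCC C) {X W : O} (g : Hom C X W)
    (Y : O) : Hom C (c_prod CC X Y) (c_prod CC W Y) :=
  c_pair CC (cmp C g (c_p1 CC X Y)) (c_p2 CC X Y).

Record IOFunctor {O : Type} (E C : Category O) := {
  fmap : forall X Y, Hom E X Y -> Hom C X Y;
  fmap_id : forall X, fmap (cid E X) = cid C X;
  fmap_cmp : forall X Y Z (g : Hom E Y Z) (f : Hom E X Y),
      fmap (cmp E g f) = cmp C (fmap g) (fmap f) }.
Arguments fmap {O E C} p {X Y} f : rename.

Definition ccc_functor {O} {E C : Category O} (p : IOFunctor E C) : Prop :=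
  (forall T, is_terminal E T -> is_terminal C T) /\
  (forall X Y P (q1 : Hom E P X) (q2 : Hom E P Y),
      is_product E q1 q2 -> is_product C (fmap p q1) (fmap p q2)) /\
  (forall Y Z Ex P (q1 : Hom E P Ex) (q2 : Hom E P Y) (ev : Hom E P Z),
      is_exponential E q1 q2 ev ->
      is_exponential C (fmap p q1) (fmap p q2) (fmap p ev)).

(* Natural systems: functors F C -> Ab.  A morphism (a,b) : f -> g in the
   category of factorizations is a pair a : A' -> A, b : B -> B' with
   b f a = g; ns_act f g a b e is D(a,b) : D_f -> D_g. *)
Record NatSys {O : Type} (C : Category O) := {
  ns_grp : forall A B, Hom C A B -> zmodType;
  ns_act : forall A B A' B' (f : Hom C A B) (g : Hom C A' B')
      (a : Hom C A' A) (b : Hom C B B'),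
      cmp C b (cmp C f a) = g -> ns_grp f -> ns_grp g;
  ns_act_add : forall A B A' B' (f : Hom C A B) (g : Hom C A' B')
      (a : Hom C A' A) (b : Hom C B B') (e : cmp C b (cmp C f a) = g)
      (x y : ns_grp f), ns_act e (x + y) = ns_act e x + ns_act e y;
  ns_act_id : forall A B (f : Hom C A B)
      (e : cmp C (cid C B) (cmp C f (cid C A)) = f) (x : ns_grp f),
      ns_act e x = x;
  ns_act_cmp : forall A B A' B' A'' B'' (f : Hom C A B) (g : Hom C A' B')
      (h : Hom C A'' B'') (a : Hom C A' A) (b : Hom C B B')
      (a' : Hom C A'' A') (b' : Hom C B' B'')
      (e1 : cmp C b (cmp C f a) = g) (e2 : cmp C b' (cmp C g a') = h)
      (e3 : cmp C (cmp C b' b) (cmp C f (cmp C a a')) = h) (x : ns_grp f),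
      ns_act e2 (ns_act e1 x) = ns_act e3 x }.
Arguments ns_grp {O C} D {A B} f : rename.
Arguments ns_act {O C} D {A B A' B' f g a b} e x : rename.

Section NSops.
Context {O : Type} {C : Category O}.

Lemma push_eq A B B' (b : Hom C B B') (f : Hom C A B) :
  cmp C b (cmp C f (cid C A)) = cmp C b f.
Proof. by rewrite cmp_id_r. Qed.

Lemma pull_eq A' A B (a : Hom C A' A) (f : Hom C A B) :
  cmp C (cid C B) (cmp C f a) = cmp C f a.
Proof. by rewrite cmp_id_l. Qed.

Definition push (D : NatSys C) {A B B'} (b : Hom C B B') (f : Hom C A B) :
  ns_grp D f -> ns_grp D (cmp C b f) := ns_act D (push_eq b f).

Definition pull (D : NatSys C) {A' A B} (a : Hom C A' A) (f : Hom C A B) :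
  ns_grp D f -> ns_grp D (cmp C f a) := ns_act D (pull_eq a f).

Definition cartesian_ns (D : NatSys C) : Prop :=
  forall n (Xs : 'I_n -> O) (P : O) (pr : forall k, Hom C P (Xs k)),
    is_nproduct C Xs P pr ->
    forall X (f : Hom C X P),
      bijective (fun xi : ns_grp D f =>
                   (fun k => @push D _ _ _ (pr k) f xi)
                   : forall k, ns_grp D (cmp C (pr k) f)).

Variable CC : CCC C.

Lemma phi1_eq X Y W (g : Hom C X W) :
  cmp C (c_p1 CC W Y) (cmp C (times1 CC g Y) (cid C _)) =
  cmp C g (c_p1 CC X Y).
Proof. by rewrite cmp_id_r /times1 c_p1_pair. Qed.

Lemma phi2_eq X Y W (g : Hom C X W) :
  cmp C (c_p2 CC W Y) (cmp C (times1 CC g Y) (cid C _)) = c_p2 CC X Y.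
Proof. by rewrite cmp_id_r /times1 c_p2_pair. Qed.

Lemma ev_eq X Y Z (f : Hom C (c_prod CC X Y) Z) :
  cmp C (c_ev CC Y Z) (cmp C (times1 CC (c_curry CC f) Y) (cid C _)) = f.
Proof. by rewrite cmp_id_r /times1 c_beta. Qed.

(* D cartesian closed: cartesian, and for every f : X x Y -> Z the map
   D_{lambda f} -> D_f, xi |-> ev_* phi_{lambda f}(xi, 0) is an isomorphism.
   Here phi_g(xi,0) is the (unique, by cartesianness) zeta in D_{g x 1_Y}
   whose components under the cartesian iso are (pi_1^* xi, 0). *)
Definition ccc_ns (D : NatSys C) : Prop :=
  cartesian_ns D /\
  forall X Y Z (f : Hom C (c_prod CC X Y) Z),
    exists Phi : ns_grp D (c_curry CC f) -> ns_grp D f,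
      (forall (xi : ns_grp D (c_curry CC f))
              (zeta : ns_grp D (times1 CC (c_curry CC f) Y)),
          ns_act D (phi1_eq Y (c_curry CC f)) zeta
            = @pull D _ _ _ (c_p1 CC X Y) (c_curry CC f) xi ->
          ns_act D (phi2_eq Y (c_curry CC f)) zeta = 0 ->
          Phi xi = ns_act D (ev_eq f) zeta) /\
      bijective Phi.

End NSops.
Arguments push {O C} D {A B B'} b f : rename.
Arguments pull {O C} D {A' A B} a f : rename.
Arguments cartesian_ns {O C} D : rename.
Arguments ccc_ns {O C} CC D : rename.

Record LinExt {O : Type} {C E : Category O} (D : NatSys C)
    (p : IOFunctor E C) := {
  le_full : forall A B (f : Hom C A B), exists ft : Hom E A B, fmap p ft = f;
  le_act : forall A B (f : Hom C A B), ns_grp D f -> Hom E A B -> Hom E A B;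
  le_act_fib : forall A B (f : Hom C A B) xi (ft : Hom E A B),
      fmap p ft = f -> fmap p (@le_act A B f xi ft) = f;
  le_act0 : forall A B (f : Hom C A B) (ft : Hom E A B),
      fmap p ft = f -> @le_act A B f 0 ft = ft;
  le_actD : forall A B (f : Hom C A B) (xi eta : ns_grp D f) (ft : Hom E A B),
      fmap p ft = f -> @le_act A B f (xi + eta) ft = @le_act A B f xi (@le_act A B f eta ft);
  le_transitive : forall A B (f : Hom C A B) (ft gt : Hom E A B),
      fmap p ft = f -> fmap p gt = f -> exists xi : ns_grp D f, @le_act A B f xi ft = gt;
  le_free : forall A B (f : Hom C A B) (xi : ns_grp D f) (ft : Hom E A B),
      fmap p ft = f -> @le_act A B f xi ft = ft -> xi = 0;
  le_cmp : forall A B B' (f : Hom C B B') (g : Hom C A B)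
      (ft : Hom E B B') (gt : Hom E A B) (xi : ns_grp D f) (eta : ns_grp D g),
      fmap p ft = f -> fmap p gt = g ->
      cmp E (@le_act B B' f xi ft) (@le_act A B g eta gt) =
      @le_act A B' (cmp C f g) (push D f g eta + pull D g f xi) (cmp E ft gt) }.
Arguments le_act {O C E D p} L {A B f} xi ft : rename.

(* BiMag_S and the free cartesian closed category CFam_S, presented by
   combinators modulo the CCC equations (a congruence). *)
Inductive BiMag (S : Type) : Type :=
| bsort : S -> BiMag S
| bone : BiMag S
| bprod : BiMag S -> BiMag S -> BiMag S
| bexp : BiMag S -> BiMag S -> BiMag S.   (* bexp Y X = Y^X *)
Arguments bone {S} : rename.

Inductive Tm {S : Type} : BiMag S -> BiMag S -> Type :=
| tid X : Tm X X
| tcmp X Y Z : Tm Y Z -> Tm X Y -> Tm X Z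
| tbang X : Tm X bone
| tp1 X Y : Tm (bprod X Y) X
| tp2 X Y : Tm (bprod X Y) Y
| tpair Z X Y : Tm Z X -> Tm Z Y -> Tm Z (bprod X Y)
| tev Y Z : Tm (bprod (bexp Z Y) Y) Z
| tcurry X Y Z : Tm (bprod X Y) Z -> Tm X (bexp Z Y).

Inductive teq {S : Type} : forall X Y : BiMag S, Tm X Y -> Tm X Y -> Prop :=
| teq_refl X Y (t : Tm X Y) : teq t t
| teq_sym X Y (t u : Tm X Y) : teq t u -> teq u t
| teq_trans X Y (t u v : Tm X Y) : teq t u -> teq u v -> teq t v
| teq_cmp X Y Z (t t' : Tm Y Z) (u u' : Tm X Y) :
    teq t t' -> teq u u' -> teq (tcmp t u) (tcmp t' u')
| teq_pair Z X Y (t t' : Tm Z X) (u u' : Tm Z Y) :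
    teq t t' -> teq u u' -> teq (tpair t u) (tpair t' u')
| teq_curry X Y Z (t t' : Tm (bprod X Y) Z) :
    teq t t' -> teq (tcurry t) (tcurry t')
| teq_id_l X Y (t : Tm X Y) : teq (tcmp (tid Y) t) t
| teq_id_r X Y (t : Tm X Y) : teq (tcmp t (tid X)) t
| teq_assoc X Y Z W (h : Tm Z W) (g : Tm Y Z) (f : Tm X Y) :
    teq (tcmp h (tcmp g f)) (tcmp (tcmp h g) f)
| teq_bang X (t : Tm X bone) : teq t (tbang X)
| teq_p1 Z X Y (t : Tm Z X) (u : Tm Z Y) : teq (tcmp (tp1 X Y) (tpair t u)) t
| teq_p2 Z X Y (t : Tm Z X) (u : Tm Z Y) : teq (tcmp (tp2 X Y) (tpair t u)) u
| teq_pair_eta Z X Y (h : Tm Z (bprod X Y)) :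
    teq (tpair (tcmp (tp1 X Y) h) (tcmp (tp2 X Y) h)) h
| teq_beta X Y Z (t : Tm (bprod X Y) Z) :
    teq (tcmp (tev Y Z) (tpair (tcmp (tcurry t) (tp1 X Y)) (tp2 X Y))) t
| teq_eta X Y Z (h : Tm X (bexp Z Y)) :
    teq (tcurry (tcmp (tev Y Z) (tpair (tcmp h (tp1 X Y)) (tp2 X Y)))) h.

Definition sorted_ccc {S : Type} (C : Category (BiMag S))
    (iota : forall X Y : BiMag S, Tm X Y -> Hom C X Y) : Prop :=
  (forall X Y (t u : Tm X Y), teq t u -> iota X Y t = iota X Y u) /\
  (forall X, iota X X (tid X) = cid C X) /\
  (forall X Y Z (t : Tm Y Z) (u : Tm X Y),
      iota X Z (tcmp t u) = cmp C (iota Y Z t) (iota X Y u)) /\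
  is_terminal C bone /\
  (forall X Y, is_product C (iota _ _ (tp1 X Y)) (iota _ _ (tp2 X Y))) /\
  (forall Y Z, is_exponential C (iota _ _ (tp1 (bexp Z Y) Y))
                                (iota _ _ (tp2 (bexp Z Y) Y))
                                (iota _ _ (tev Y Z))).

(* Since p is full and every fibre p^-1(f) is a D_f-torsor, a cone of E lying
   over a universal cone of C is itself universal exactly when the maps it
   induces between torsors are bijective.  Over an n-ary product this map is
   xi |-> (pr_k_* xi)_k, so lifts of products are products iff D is cartesian.
   Over an exponential, translating a lift of curry f by xi translates
   ev o (curry f x 1) by ev_* phi(xi, 0), so lifts of evaluation maps are
   exponentials iff these maps D_(curry f) -> D_f are bijective.  Conversely,
   isomorphisms lift along p, so a cartesian closed structure of E preserved
   by p is isomorphic to a lift of the one of C.  Finally the lifted structure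
   interprets the free cartesian closed category CFam_S in E, and this
   interpretation lies over iota because two cartesian closed interpretations
   that agree on projections and evaluations agree everywhere. *)

From mathcomp Require Import all_boot all_algebra.
From Stdlib Require Import ProofIrrelevance FunctionalExtensionality ClassicalEpsilon.
Set Implicit Arguments.
Unset Strict Implicit.
Unset Printing Implicit Defensive.
Import GRing.Theory.

Local Notation "g ∘ f" := (cmp _ g f) (at level 40, left associativity).

(** * Limits and exponentials *)

Section Limits.
Context {O : Type} (K : Category O).

Lemma product_hom_eq {X Y P} {q1 : Hom K P X} {q2 : Hom K P Y} :
  is_product K q1 q2 -> forall Z (h h' : Hom K Z P),
  q1 ∘ h = q1 ∘ h' -> q2 ∘ h = q2 ∘ h' -> h = h'.
Proof.
move=> HP Z h h' e1 e2; have [k [_ Hk]] := HP Z (q1 ∘ h) (q2 ∘ h).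
by rewrite -(Hk h (conj erefl erefl)) (Hk h' (conj (esym e1) (esym e2))).
Qed.

Lemma product_pair {X Y P} {q1 : Hom K P X} {q2 : Hom K P Y} :
  is_product K q1 q2 -> forall Z (f : Hom K Z X) (g : Hom K Z Y),
  exists h, q1 ∘ h = f /\ q2 ∘ h = g.
Proof. by move=> HP Z f g; have [h [Hh _]] := HP Z f g; exists h. Qed.

Lemma product_iso {X Y P P'} {q1 : Hom K P X} {q2 : Hom K P Y}
    {q1' : Hom K P' X} {q2' : Hom K P' Y} :
  is_product K q1 q2 -> is_product K q1' q2' ->
  exists (u : Hom K P P') (w : Hom K P' P),
    [/\ q1' ∘ u = q1, q2' ∘ u = q2, u ∘ w = cid K P' & w ∘ u = cid K P].
Proof.
move=> HP HP'.
have [u [u1 u2]] := product_pair HP' q1 q2.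
have [w [w1 w2]] := product_pair HP q1' q2'.
exists u, w; split=> //.
  by apply: (product_hom_eq HP'); rewrite cmp_id_r cmp_assoc ?u1 ?u2 ?w1 ?w2.
by apply: (product_hom_eq HP); rewrite cmp_id_r cmp_assoc ?u1 ?u2 ?w1 ?w2.
Qed.

Lemma product_transport {X Y P P'} {q1 : Hom K P' X} {q2 : Hom K P' Y}
    (u : Hom K P P') (w : Hom K P' P) :
  is_product K q1 q2 -> u ∘ w = cid K P' -> w ∘ u = cid K P ->
  is_product K (q1 ∘ u) (q2 ∘ u).
Proof.
move=> HP uw wu Z f g; have [h [h1 h2]] := product_pair HP f g.
have uwh : u ∘ (w ∘ h) = h by rewrite cmp_assoc uw cmp_id_l.
exists (w ∘ h); split; first by rewrite -!cmp_assoc uwh h1 h2.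
move=> h' [e1 e2]; have <- : u ∘ h' = h.
  by apply: (product_hom_eq HP); rewrite cmp_assoc ?e1 ?e2 ?h1 ?h2.
by rewrite cmp_assoc wu cmp_id_l.
Qed.

Lemma nproduct_hom_eq {n} {Xs : 'I_n -> O} {P} {pr : forall k, Hom K P (Xs k)} :
  is_nproduct K Xs P pr -> forall Z (h h' : Hom K Z P),
  (forall k, pr k ∘ h = pr k ∘ h') -> h = h'.
Proof.
move=> HP Z h h' e; have [k [_ Hk]] := HP Z (fun k => pr k ∘ h).
by rewrite -(Hk h (fun _ => erefl)) (Hk h' (fun k => esym (e k))).
Qed.

Lemma nproduct_tuple {n} {Xs : 'I_n -> O} {P} {pr : forall k, Hom K P (Xs k)} :
  is_nproduct K Xs P pr -> forall Z (fs : forall k, Hom K Z (Xs k)),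
  exists h, forall k, pr k ∘ h = fs k.
Proof. by move=> HP Z fs; have [h [Hh _]] := HP Z fs; exists h. Qed.

Lemma nproduct_iso {n} {Xs : 'I_n -> O} {P P'} {pr : forall k, Hom K P (Xs k)}
    {pr' : forall k, Hom K P' (Xs k)} :
  is_nproduct K Xs P pr -> is_nproduct K Xs P' pr' ->
  exists (u : Hom K P P') (w : Hom K P' P),
    [/\ forall k, pr' k ∘ u = pr k, u ∘ w = cid K P' & w ∘ u = cid K P].
Proof.
move=> HP HP'.
have [u Hu] := nproduct_tuple HP' pr.
have [w Hw] := nproduct_tuple HP pr'.
exists u, w; split=> //.
  by apply: (nproduct_hom_eq HP') => k; rewrite cmp_id_r cmp_assoc Hu Hw.
by apply: (nproduct_hom_eq HP) => k; rewrite cmp_id_r cmp_assoc Hw Hu.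
Qed.

Lemma nproduct_transport {n} {Xs : 'I_n -> O} {P P'}
    {pr' : forall k, Hom K P' (Xs k)} (u : Hom K P P') (w : Hom K P' P) :
  is_nproduct K Xs P' pr' -> u ∘ w = cid K P' -> w ∘ u = cid K P ->
  is_nproduct K Xs P (fun k => pr' k ∘ u).
Proof.
move=> HP uw wu Z fs; have [h Hh] := nproduct_tuple HP fs.
exists (w ∘ h); split.
  by move=> k; rewrite -cmp_assoc (cmp_assoc u) uw cmp_id_l.
move=> h' H'; have <- : u ∘ h' = h.
  by apply: (nproduct_hom_eq HP) => k; rewrite Hh cmp_assoc H'.
by rewrite cmp_assoc wu cmp_id_l.
Qed.

Definition family2 (X Y : O) (k : 'I_2) : O :=
  match nat_of_ord k with 0 => X | _ => Y end.

Definition tuple2 {Z X Y : O} (f : Hom K Z X) (g : Hom K Z Y) :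
  forall k : 'I_2, Hom K Z (family2 X Y k) :=
  fun k => match nat_of_ord k as m
             return Hom K Z (match m with 0 => X | _ => Y end) with
           | 0 => f | _ => g end.

Lemma nproduct2_of_product {X Y P} (q1 : Hom K P X) (q2 : Hom K P Y) :
  is_product K q1 q2 -> is_nproduct K (family2 X Y) P (tuple2 q1 q2).
Proof.
move=> HP Z fs.
have [h [h1 h2]] := product_pair HP (fs ord0) (fs (@Ordinal 2 1 isT)).
exists h; split.
  move=> [[|[|m]] lt] //=.
    by rewrite h1 (bool_irrelevance lt (ltn0Sn 1)).
  by rewrite h2 (bool_irrelevance lt isT).
move=> h' H'; apply: (product_hom_eq HP); rewrite ?h1 ?h2.
  exact: (esym (H' ord0)).
exact: (esym (H' (@Ordinal 2 1 isT))).
Qed.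

Lemma product_of_nproduct2 {X Y P} (q1 : Hom K P X) (q2 : Hom K P Y) :
  is_nproduct K (family2 X Y) P (tuple2 q1 q2) -> is_product K q1 q2.
Proof.
move=> HP Z f g; have [h Hh] := nproduct_tuple HP (tuple2 f g).
exists h; split; first by split; [apply: (Hh ord0) | apply: (Hh (@Ordinal 2 1 isT))].
move=> h' [e1 e2]; apply: (nproduct_hom_eq HP) => -[[|[|m]] lt] //=.
  by rewrite e1; apply: (Hh (Ordinal lt)).
by rewrite e2; apply: (Hh (Ordinal lt)).
Qed.

Lemma nproduct0_of_terminal {Xs : 'I_0 -> O} T (pr : forall k, Hom K T (Xs k)) :
  is_terminal K T -> is_nproduct K Xs T pr.
Proof.
move=> HT Z fs; have [h [_ Hh]] := HT Z.
by exists h; split=> [[]|h' _] //; apply: Hh.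
Qed.

Lemma terminal_of_nproduct0 {Xs : 'I_0 -> O} T (pr : forall k, Hom K T (Xs k)) :
  is_nproduct K Xs T pr -> is_terminal K T.
Proof.
move=> HT X.
have [h _] :=
  nproduct_tuple HT (fun k : 'I_0 => False_rect (Hom K X (Xs k)) (notF (ltn_ord k))).
by exists h; split=> // h' _; apply: (nproduct_hom_eq HT) => -[].
Qed.

Section ConsProduct.
Variables (n : nat) (Xs : 'I_n.+1 -> O) (R : O)
  (rs : forall j : 'I_n, Hom K R (Xs (lift ord0 j)))
  (P : O) (q1 : Hom K P (Xs ord0)) (q2 : Hom K P R).

Definition cons_proj (k : 'I_n.+1) : Hom K P (Xs k) :=
  match unliftP ord0 k with
  | UnliftSome j e => ecast i (Hom K P (Xs i)) (esym e) (rs j ∘ q2)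
  | UnliftNone e => ecast i (Hom K P (Xs i)) (esym e) q1
  end.

Lemma cons_proj0 : cons_proj ord0 = q1.
Proof.
rewrite /cons_proj; case: unliftP => [j e|e].
  by exfalso; move: (neq_lift ord0 j); rewrite -e eqxx.
by rewrite (eq_irrelevance e erefl).
Qed.

Lemma cons_proj_lift j : cons_proj (lift ord0 j) = rs j ∘ q2.
Proof.
rewrite /cons_proj; case: unliftP => [j' e|e]; last first.
  by exfalso; move: (neq_lift ord0 j); rewrite e eqxx.
have ej := lift_inj e; subst j'.
by rewrite (eq_irrelevance e erefl).
Qed.

Lemma nproduct_cons :
  is_nproduct K (fun j => Xs (lift ord0 j)) R rs -> is_product K q1 q2 ->
  is_nproduct K Xs P cons_proj.
Proof.
move=> HR HP Z fs.
have [r Hr] := nproduct_tuple HR (fun j => fs (lift ord0 j)).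
have [h [h1 h2]] := product_pair HP (fs ord0) r.
exists h; split.
  move=> k; case: (unliftP ord0 k) => [j ->|->].
    by rewrite cons_proj_lift -cmp_assoc h2 Hr.
  by rewrite cons_proj0 h1.
move=> h' H'; apply: (product_hom_eq HP).
  by rewrite h1 -(H' ord0) cons_proj0.
apply: (nproduct_hom_eq HR) => j; rewrite h2 Hr -(H' (lift ord0 j)).
by rewrite cons_proj_lift cmp_assoc.
Qed.

End ConsProduct.
End Limits.

Section Exponentials.
Context {O : Type} (K : Category O).

Definition exp_universal_at {Y Z Ex P X Q} (q1 : Hom K P Ex) (q2 : Hom K P Y)
    (ev : Hom K P Z) (r1 : Hom K Q X) (r2 : Hom K Q Y) : Prop :=
  forall f : Hom K Q Z, exists! h : Hom K X Ex,
    forall m : Hom K Q P, q1 ∘ m = h ∘ r1 -> q2 ∘ m = r2 -> ev ∘ m = f.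

Lemma exp_universal_at_change {Y Z Ex P X Q Q'} (q1 : Hom K P Ex)
    (q2 : Hom K P Y) (ev : Hom K P Z) (r1 : Hom K Q X) (r2 : Hom K Q Y)
    (r1' : Hom K Q' X) (r2' : Hom K Q' Y) :
  is_product K r1 r2 -> is_product K r1' r2' ->
  exp_universal_at q1 q2 ev r1 r2 -> exp_universal_at q1 q2 ev r1' r2'.
Proof.
move=> HQ HQ' Hex f'.
have [k [k' [k1 k2 kk' k'k]]] := product_iso HQ' HQ.
have [h [Hh Hu]] := Hex (f' ∘ k').
have k'1 : r1' ∘ k' = r1 by rewrite -k1 -cmp_assoc kk' cmp_id_r.
have k'2 : r2' ∘ k' = r2 by rewrite -k2 -cmp_assoc kk' cmp_id_r.
exists h; split.
  move=> m' e1 e2; have := Hh (m' ∘ k').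
  rewrite !cmp_assoc e1 e2 -!cmp_assoc k'1 k'2 => /(_ erefl erefl) e.
  by rewrite -[m']cmp_id_r -k'k (cmp_assoc m') (cmp_assoc ev) e -cmp_assoc k'k cmp_id_r.
move=> h' H'; apply: Hu => m e1 e2; have := H' (m ∘ k).
rewrite !cmp_assoc e1 e2 -!cmp_assoc k1 k2 => /(_ erefl erefl) e.
by rewrite -[m]cmp_id_r -kk' (cmp_assoc m) (cmp_assoc ev) e.
Qed.

Lemma is_exponential_of_universal_at {Y Z Ex P} (q1 : Hom K P Ex) (q2 : Hom K P Y)
    (ev : Hom K P Z) :
  is_product K q1 q2 ->
  (forall X, exists Q (r1 : Hom K Q X) (r2 : Hom K Q Y),
      is_product K r1 r2 /\ exp_universal_at q1 q2 ev r1 r2) ->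
  is_exponential K q1 q2 ev.
Proof.
move=> HP H; split=> // X Q r1 r2 HQ.
have [Q0 [s1 [s2 [HQ0 Hat]]]] := H X.
exact: exp_universal_at_change HQ0 HQ Hat.
Qed.

Lemma exponential_transport {Y Z Ex Ex' P P'} (q1 : Hom K P Ex)
    (q2 : Hom K P Y) (ev : Hom K P Z) (q1' : Hom K P' Ex') (q2' : Hom K P' Y)
    (u : Hom K Ex' Ex) (w : Hom K Ex Ex') (m0 : Hom K P' P) :
  is_exponential K q1 q2 ev -> is_product K q1' q2' ->
  u ∘ w = cid K Ex -> w ∘ u = cid K Ex' ->
  q1 ∘ m0 = u ∘ q1' -> q2 ∘ m0 = q2' ->
  is_exponential K q1' q2' (ev ∘ m0).
Proof.
move=> [HP Hex] HP' uw wu m01 m02; split=> // X Q r1 r2 HQ f.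
have [h [Hh Hu]] := Hex X Q r1 r2 HQ f.
exists (w ∘ h); split.
  move=> m e1 e2; rewrite -cmp_assoc; apply: Hh.
    by rewrite cmp_assoc m01 -cmp_assoc e1 !cmp_assoc uw cmp_id_l.
  by rewrite cmp_assoc m02.
move=> h' H'; have -> : h' = w ∘ (u ∘ h') by rewrite cmp_assoc wu cmp_id_l.
congr (w ∘ _); apply: Hu => m e1 e2.
have [m' [e1' e2']] := product_pair HP' (h' ∘ r1) r2.
have -> : m = m0 ∘ m'.
  apply: (product_hom_eq HP); rewrite cmp_assoc ?m01 ?m02 ?e2' ?e2 //.
  by rewrite -cmp_assoc e1' e1 cmp_assoc.
by rewrite cmp_assoc; apply: H'.
Qed.

Lemma exponential_curry_ev_id {Y Z Ex P} (q1 : Hom K P Ex) (q2 : Hom K P Y)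
    (ev : Hom K P Z) (g : Hom K Ex Ex) :
  is_exponential K q1 q2 ev ->
  (forall m, q1 ∘ m = g ∘ q1 -> q2 ∘ m = q2 -> ev ∘ m = ev) -> g = cid K Ex.
Proof.
move=> [HP Hex] Hg; have [g0 [_ Hg0]] := Hex _ _ _ _ HP ev.
rewrite -(Hg0 g Hg); apply: Hg0 => m; rewrite cmp_id_l => e1 e2.
have -> : m = cid K P by apply: (product_hom_eq HP); rewrite cmp_id_r ?e1 ?e2.
by rewrite cmp_id_r.
Qed.

Lemma exponential_unique {Y Z Ex Ex' P P'} (q1 : Hom K P Ex) (q2 : Hom K P Y)
    (ev : Hom K P Z) (q1' : Hom K P' Ex') (q2' : Hom K P' Y) (ev' : Hom K P' Z) :
  is_exponential K q1 q2 ev -> is_exponential K q1' q2' ev' ->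
  exists (u : Hom K Ex' Ex) (w : Hom K Ex Ex') (m0 : Hom K P' P),
   [/\ u ∘ w = cid K Ex, w ∘ u = cid K Ex', q1 ∘ m0 = u ∘ q1', q2 ∘ m0 = q2'
     & ev ∘ m0 = ev'].
Proof.
move=> HE HE'; have [HP Hex] := HE; have [HP' Hex'] := HE'.
have [u [Hu _]] := Hex _ _ _ _ HP' ev'.
have [w [Hw _]] := Hex' _ _ _ _ HP ev.
have [m0 [m01 m02]] := product_pair HP (u ∘ q1') q2'.
have [n0 [n01 n02]] := product_pair HP' (w ∘ q1) q2.
have evm0 : ev ∘ m0 = ev' by apply: Hu.
have evn0 : ev' ∘ n0 = ev by apply: Hw.
exists u, w, m0; split=> //.
  apply: (exponential_curry_ev_id HE) => m e1 e2.
  have -> : m = m0 ∘ n0.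
    apply: (product_hom_eq HP); rewrite ?e1 ?e2 cmp_assoc ?m01 ?m02 ?n02 //.
    by rewrite -(cmp_assoc u q1' n0) n01 !cmp_assoc.
  by rewrite cmp_assoc evm0 evn0.
apply: (exponential_curry_ev_id HE') => m e1 e2.
have -> : m = n0 ∘ m0.
  apply: (product_hom_eq HP'); rewrite ?e1 ?e2 cmp_assoc ?n01 ?n02 ?m02 //.
  by rewrite -(cmp_assoc w q1 m0) m01 !cmp_assoc.
by rewrite cmp_assoc evn0 evm0.
Qed.

End Exponentials.

Section CCCLimits.
Context {O : Type} {C : Category O} (CC : CCC C).

Lemma ccc_terminal : is_terminal C (c_one CC).
Proof. by move=> X; exists (c_bang CC X); split=> // h _; rewrite (c_bang_uniq h). Qed.

Lemma ccc_product X Y : is_product C (c_p1 CC X Y) (c_p2 CC X Y).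
Proof.
move=> Z f g; exists (c_pair CC f g); split; first by rewrite c_p1_pair c_p2_pair.
by move=> h [e1 e2]; rewrite -(c_pair_eta h) e1 e2.
Qed.

Lemma ccc_exponential Y Z :
  is_exponential C (c_p1 CC (c_exp CC Z Y) Y) (c_p2 CC (c_exp CC Z Y) Y)
    (c_ev CC Y Z).
Proof.
apply: is_exponential_of_universal_at; first exact: ccc_product.
move=> X; exists (c_prod CC X Y), (c_p1 CC X Y), (c_p2 CC X Y).
split=> [|f]; first exact: ccc_product.
have times1E m : c_p1 CC _ _ ∘ m = c_curry CC f ∘ c_p1 CC X Y ->
    c_p2 CC _ _ ∘ m = c_p2 CC X Y -> m = times1 CC (c_curry CC f) Y.
  by move=> e1 e2; rewrite -(c_pair_eta m) e1 e2.
exists (c_curry CC f); split=> [m e1 e2|h Hh].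
  by rewrite (times1E m e1 e2) c_beta.
rewrite -(c_eta h); congr (c_curry CC _).
by apply/esym/Hh; rewrite ?c_p1_pair ?c_p2_pair.
Qed.

End CCCLimits.

(** * Linear extensions *)

Section NatSysFacts.
Context {O : Type} {C : Category O} (D : NatSys C).

Lemma ns_act0 A B A' B' (f : Hom C A B) (g : Hom C A' B') a b
    (e : cmp C b (cmp C f a) = g) :
  ns_act D e 0%R = 0%R.
Proof. by apply/(addrI (ns_act D e 0%R)); rewrite -ns_act_add !addr0. Qed.

Lemma ns_act_ext A B A' B' (f : Hom C A B) (g : Hom C A' B')
    (a a' : Hom C A' A) (b b' : Hom C B B') (e : cmp C b (cmp C f a) = g)
    (e' : cmp C b' (cmp C f a') = g) x :
  a = a' -> b = b' -> ns_act D e x = ns_act D e' x.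
Proof. by move=> ea eb; subst a' b'; rewrite (proof_irrelevance _ e e'). Qed.

End NatSysFacts.

Section LinExtFacts.
Context {O : Type} {C E : Category O} {D : NatSys C} {p : IOFunctor E C}
  (L : LinExt D p).

Lemma le_act_inj A B (f : Hom C A B) (ft : Hom E A B) (xi eta : ns_grp D f) :
  fmap p ft = f -> le_act L xi ft = le_act L eta ft -> xi = eta.
Proof.
move=> Hft e; apply/eqP; rewrite -subr_eq0; apply/eqP.
apply: (le_free (l := L) (le_act_fib L eta Hft)).
by rewrite -(le_actD L (xi - eta) eta Hft) subrK.
Qed.

Lemma le_act_cmpl A B B' (f : Hom C B B') (g : Hom C A B) (ft : Hom E B B')
    (gt : Hom E A B) (xi : ns_grp D f) :
  fmap p ft = f -> fmap p gt = g ->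
  le_act L xi ft ∘ gt = le_act L (pull D g f xi) (ft ∘ gt).
Proof.
move=> Hf Hg; rewrite -{1}(le_act0 L Hg) (le_cmp L xi 0%R Hf Hg).
by rewrite /push ns_act0 add0r.
Qed.

Lemma le_act_cmpr A B B' (f : Hom C B B') (g : Hom C A B) (ft : Hom E B B')
    (gt : Hom E A B) (eta : ns_grp D g) :
  fmap p ft = f -> fmap p gt = g ->
  ft ∘ le_act L eta gt = le_act L (push D f g eta) (ft ∘ gt).
Proof.
move=> Hf Hg; rewrite -{1}(le_act0 L Hf) (le_cmp L 0%R eta Hf Hg).
by rewrite /pull ns_act0 addr0.
Qed.

Lemma le_act_ns_act A B A' B' (f : Hom C A B) (g : Hom C A' B')
    (a : Hom C A' A) (b : Hom C B B') (e : cmp C b (cmp C f a) = g)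
    (x : ns_grp D f) (ta : Hom E A' A) (tb : Hom E B B') (ft : Hom E A B) :
  fmap p ta = a -> fmap p tb = b -> fmap p ft = f ->
  le_act L (ns_act D e x) (tb ∘ (ft ∘ ta)) = tb ∘ (le_act L x ft ∘ ta).
Proof.
move=> Ha Hb Hf; case: g / e.
have Hfa : fmap p (ft ∘ ta) = cmp C f a by rewrite fmap_cmp Ha Hf.
rewrite (le_act_cmpl x Hf Ha) (le_act_cmpr _ Hb Hfa); congr (le_act L _ _).
have e3 : cmp C (cmp C b (cid C B)) (cmp C f (cmp C a (cid C A'))) =
          cmp C b (cmp C f a) by rewrite !cmp_id_r.
rewrite /push /pull (ns_act_cmp _ _ e3).
by apply: ns_act_ext; rewrite cmp_id_r.
Qed.

Lemma lift_id_invertible A (g : Hom E A A) :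
  fmap p g = cid C A -> exists w, w ∘ g = cid E A /\ g ∘ w = cid E A.
Proof.
move=> Hg; have Hid : fmap p (cid E A) = cid C A := fmap_id p A.
have [xi <-] := le_transitive L Hid Hg.
have Hii : fmap p (cid E A ∘ cid E A) = cmp C (cid C A) (cid C A).
  by rewrite fmap_cmp Hid.
have act_sum u v : (push D (cid C A) (cid C A) u + pull D (cid C A) (cid C A) v)%R
    = ns_act D (push_eq (cid C A) (cid C A)) (u + v)%R.
  by rewrite ns_act_add; congr (_ + _)%R; apply: ns_act_ext.
exists (le_act L (- xi)%R (cid E A)); rewrite !(le_cmp L _ _ Hid Hid) !act_sum.
by rewrite addNr addrN ns_act0 (le_act0 L Hii) cmp_id_l.
Qed.

Lemma lift_invertible A B (u : Hom C A B) (v : Hom C B A) (ut : Hom E A B)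
    (vt : Hom E B A) :
  fmap p ut = u -> fmap p vt = v -> cmp C v u = cid C A -> cmp C u v = cid C B ->
  exists wt, wt ∘ ut = cid E A /\ ut ∘ wt = cid E B.
Proof.
move=> Hu Hv vu uv.
have [w1 [w1l w1r]] : exists w, w ∘ (vt ∘ ut) = cid E A /\ vt ∘ ut ∘ w = cid E A.
  by apply: lift_id_invertible; rewrite fmap_cmp Hu Hv.
have [w2 [w2l w2r]] : exists w, w ∘ (ut ∘ vt) = cid E B /\ ut ∘ vt ∘ w = cid E B.
  by apply: lift_id_invertible; rewrite fmap_cmp Hu Hv.
have w1_w2 : w1 ∘ vt = vt ∘ w2.
  rewrite -[w1 ∘ vt]cmp_id_r -w2r !cmp_assoc -(cmp_assoc w1 vt ut) w1l.
  by rewrite cmp_id_l.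
exists (w1 ∘ vt); split; first by rewrite -cmp_assoc.
by rewrite w1_w2 cmp_assoc.
Qed.

End LinExtFacts.

Lemma bijective_of_inj_surj {A B : Type} (F : A -> B) :
  injective F -> (forall b, exists a, F a = b) -> bijective F.
Proof.
move=> Finj Fsurj.
exists (fun b => proj1_sig (constructive_indefinite_description _ (Fsurj b))).
  by move=> a; case: constructive_indefinite_description => a' /= /Finj.
by move=> b; case: constructive_indefinite_description.
Qed.

(** * Lifting products and exponentials *)

Section CartesianLifts.
Context {O : Type} {C E : Category O} {D : NatSys C} {p : IOFunctor E C}
  (L : LinExt D p).

Definition ns_cartesian_at {n} {Xs : 'I_n -> O} {P}
    (pr : forall k, Hom C P (Xs k)) : Prop :=
  forall X (f : Hom C X P),
    bijective (fun xi : ns_grp D f =>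
                 (fun k => push D (pr k) f xi) : forall k, ns_grp D (cmp C (pr k) f)).

Section Diagram.
Variables (n : nat) (Xs : 'I_n -> O) (P : O) (pr : forall k, Hom C P (Xs k))
  (prt : forall k, Hom E P (Xs k)).
Hypotheses (HC : is_nproduct C Xs P pr) (Hprt : forall k, fmap p (prt k) = pr k).

Lemma nproduct_lift : ns_cartesian_at pr -> is_nproduct E Xs P prt.
Proof.
move=> Hcart Z fs.
have [h Hh] := nproduct_tuple HC (fun k => fmap p (fs k)).
have [ht Hht] := le_full L h.
have Hk k : fmap p (prt k ∘ ht) = cmp C (pr k) h by rewrite fmap_cmp Hprt Hht.
have al k : exists a : ns_grp D (cmp C (pr k) h), le_act L a (prt k ∘ ht) = fs k.
  by apply: (le_transitive L (Hk k)); rewrite -Hh.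
pose al' k := proj1_sig (constructive_indefinite_description _ (al k)).
have Hal k : le_act L (al' k) (prt k ∘ ht) = fs k.
  by rewrite /al'; case: constructive_indefinite_description.
have [g Hg1 Hg2] := Hcart Z h.
exists (le_act L (g al') ht); split.
  move=> k; rewrite (le_act_cmpr _ _ (Hprt k) Hht) -Hal.
  by rewrite (equal_f_dep (Hg2 al') k).
move=> ht' H'.
have Hht' : fmap p ht' = h.
  apply: (nproduct_hom_eq HC) => k.
  by rewrite Hh -Hprt -fmap_cmp H'.
have [xi exi] := le_transitive L Hht Hht'; rewrite -exi; congr (le_act L _ _).
suff <- : (fun k => push D (pr k) h xi) = al' by rewrite Hg1.
apply: functional_extensionality_dep => k; apply: (le_act_inj (L := L) (Hk k)).
by rewrite Hal -H' -exi (le_act_cmpr _ _ (Hprt k) Hht).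
Qed.

Lemma ns_cartesian_at_of_lift : is_nproduct E Xs P prt -> ns_cartesian_at pr.
Proof.
move=> HE X f; have [ft Hft] := le_full L f.
have Hk k : fmap p (prt k ∘ ft) = cmp C (pr k) f by rewrite fmap_cmp Hprt Hft.
apply: bijective_of_inj_surj.
  move=> xi eta eF; apply: (le_act_inj (L := L) Hft); apply: (nproduct_hom_eq HE) => k.
  by rewrite !(le_act_cmpr _ _ (Hprt k) Hft) (equal_f_dep eF k).
move=> be; have [g Hg] := nproduct_tuple HE (fun k => le_act L (be k) (prt k ∘ ft)).
have Hpg : fmap p g = f.
  apply: (nproduct_hom_eq HC) => k.
  by rewrite -{1}Hprt -fmap_cmp Hg (le_act_fib L _ (Hk k)).
have [xi exi] := le_transitive L Hft Hpg.
exists xi; apply: functional_extensionality_dep => k /=.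
by apply: (le_act_inj (L := L) (Hk k)); rewrite -(le_act_cmpr _ _ (Hprt k) Hft) exi Hg.
Qed.

End Diagram.

Lemma product_lift {X Y P} (q1 : Hom C P X) (q2 : Hom C P Y) (qt1 : Hom E P X)
    (qt2 : Hom E P Y) :
  cartesian_ns D -> is_product C q1 q2 -> fmap p qt1 = q1 -> fmap p qt2 = q2 ->
  is_product E qt1 qt2.
Proof.
move=> Hcart HP H1 H2; apply: product_of_nproduct2.
have HP2 := nproduct2_of_product HP.
by apply: (nproduct_lift HP2 _ (Hcart _ _ _ _ HP2)) => -[[|[|m]] lt].
Qed.

Lemma terminal_lift T : cartesian_ns D -> is_terminal C T -> is_terminal E T.
Proof.
move=> Hcart HT.
have HT0 := @nproduct0_of_terminal _ C (fun _ => T) T (fun _ => cid C T) HT.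
apply: (@terminal_of_nproduct0 _ E (fun _ => T) T (fun _ => cid E T)).
by apply: (nproduct_lift HT0 _ (Hcart _ _ _ _ HT0)) => -[].
Qed.

End CartesianLifts.

Section LiftedExponential.
Context {O : Type} {C E : Category O} {D : NatSys C} {p : IOFunctor E C}
  (L : LinExt D p) (CC : CCC C) (X Y Z : O).

Definition ns_curry_iso (f : Hom C (c_prod CC X Y) Z) : Prop :=
  exists Phi : ns_grp D (c_curry CC f) -> ns_grp D f,
    (forall (xi : ns_grp D (c_curry CC f))
            (zeta : ns_grp D (times1 CC (c_curry CC f) Y)),
        ns_act D (phi1_eq CC Y (c_curry CC f)) zeta
          = pull D (c_p1 CC X Y) (c_curry CC f) xi ->
        ns_act D (phi2_eq CC Y (c_curry CC f)) zeta = 0%R ->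
        Phi xi = ns_act D (ev_eq f) zeta) /\
    bijective Phi.

Definition phi_components (f : Hom C (c_prod CC X Y) Z)
    (xi : ns_grp D (c_curry CC f)) (zeta : ns_grp D (times1 CC (c_curry CC f) Y)) :
    Prop :=
  ns_act D (phi1_eq CC Y (c_curry CC f)) zeta
    = pull D (c_p1 CC X Y) (c_curry CC f) xi /\
  ns_act D (phi2_eq CC Y (c_curry CC f)) zeta = 0%R.

Variables (t1' : Hom E (c_prod CC (c_exp CC Z Y) Y) (c_exp CC Z Y))
  (t2' : Hom E (c_prod CC (c_exp CC Z Y) Y) Y)
  (tev : Hom E (c_prod CC (c_exp CC Z Y) Y) Z)
  (t1 : Hom E (c_prod CC X Y) X) (t2 : Hom E (c_prod CC X Y) Y).
Hypotheses (H1' : fmap p t1' = c_p1 CC (c_exp CC Z Y) Y)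
  (H2' : fmap p t2' = c_p2 CC (c_exp CC Z Y) Y) (Hev : fmap p tev = c_ev CC Y Z)
  (H1 : fmap p t1 = c_p1 CC X Y) (H2 : fmap p t2 = c_p2 CC X Y)
  (HPt : is_product E t1' t2').

Definition curries (h : Hom E X (c_exp CC Z Y)) (ft : Hom E (c_prod CC X Y) Z) :
    Prop :=
  forall mt, t1' ∘ mt = h ∘ t1 -> t2' ∘ mt = t2 -> tev ∘ mt = ft.

Lemma times1_over (ht : Hom E X (c_exp CC Z Y)) mt :
  t1' ∘ mt = ht ∘ t1 -> t2' ∘ mt = t2 -> fmap p mt = times1 CC (fmap p ht) Y.
Proof.
move=> e1 e2; apply: (product_hom_eq (ccc_product CC (X := c_exp CC Z Y) (Y := Y))).
  by rewrite /times1 c_p1_pair -H1' -fmap_cmp e1 fmap_cmp H1.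
by rewrite /times1 c_p2_pair -H2' -fmap_cmp e2 H2.
Qed.

Lemma curries_over ht ft : curries ht ft -> fmap p ht = c_curry CC (fmap p ft).
Proof.
move=> Hcur; have [mt [e1 e2]] := product_pair HPt (ht ∘ t1) t2.
by rewrite -(Hcur mt e1 e2) fmap_cmp Hev (times1_over e1 e2) c_eta.
Qed.

Section Curry.
Variables (f : Hom C (c_prod CC X Y) Z) (ht : Hom E X (c_exp CC Z Y))
  (m0t : Hom E (c_prod CC X Y) (c_prod CC (c_exp CC Z Y) Y)).
Hypotheses (Hht : fmap p ht = c_curry CC f) (m01 : t1' ∘ m0t = ht ∘ t1)
  (m02 : t2' ∘ m0t = t2).

(* Translating the lift [ht] of [curry f] by [xi] translates [ev o (ht x 1)]
   by [beta]; [ns_curry_iso f] says exactly that this is a bijection. *)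
Definition ev_shift (xi : ns_grp D (c_curry CC f)) (beta : ns_grp D f) : Prop :=
  curries (le_act L xi ht) (le_act L beta (tev ∘ m0t)).

Lemma m0_over : fmap p m0t = times1 CC (c_curry CC f) Y.
Proof. by rewrite (times1_over m01 m02) Hht. Qed.

Lemma ev_m0_over : fmap p (tev ∘ m0t) = f.
Proof. by rewrite fmap_cmp Hev m0_over /times1 c_beta. Qed.

Lemma phi_componentsP (xi : ns_grp D (c_curry CC f)) zeta :
  phi_components xi zeta <->
  (t1' ∘ le_act L zeta m0t = le_act L xi ht ∘ t1 /\
   t2' ∘ le_act L zeta m0t = t2).
Proof.
have act1 := le_act_ns_act L (phi1_eq CC Y (c_curry CC f)) zeta (fmap_id p _) H1' m0_over.
have act2 := le_act_ns_act L (phi2_eq CC Y (c_curry CC f)) zeta (fmap_id p _) H2' m0_over.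
rewrite !cmp_id_r m01 m02 in act1 act2.
have Hht1 : fmap p (ht ∘ t1) = cmp C (c_curry CC f) (c_p1 CC X Y).
  by rewrite fmap_cmp Hht H1.
rewrite -act1 -act2 (le_act_cmpl L _ Hht H1).
split=> -[e1 e2]; split.
- by rewrite e1.
- by rewrite e2 (le_act0 L H2).
- exact: (le_act_inj Hht1 e1).
- by apply: (le_act_inj (L := L) H2); rewrite e2 (le_act0 L H2).
Qed.

Lemma ev_shift_phi (xi : ns_grp D (c_curry CC f)) zeta :
  phi_components xi zeta -> ev_shift xi (ns_act D (ev_eq f) zeta).
Proof.
move=> /phi_componentsP[e1' e2'] mt e1 e2.
have -> : mt = le_act L zeta m0t.
  by apply: (product_hom_eq HPt); rewrite ?e1 ?e2 ?e1' ?e2'.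
have := le_act_ns_act L (ev_eq f) zeta (fmap_id p _) Hev m0_over.
by rewrite !cmp_id_r => ->.
Qed.

Lemma phi_components_exist (xi : ns_grp D (c_curry CC f)) :
  exists zeta, phi_components xi zeta.
Proof.
have [mt [e1 e2]] := product_pair HPt (le_act L xi ht ∘ t1) t2.
have Hmt : fmap p mt = times1 CC (c_curry CC f) Y.
  by rewrite (times1_over e1 e2) (le_act_fib L _ Hht).
have [zeta ez] := le_transitive L m0_over Hmt.
by exists zeta; apply/phi_componentsP; rewrite ez.
Qed.

Lemma ev_shift_functional xi beta beta' :
  ev_shift xi beta -> ev_shift xi beta' -> beta = beta'.
Proof.
move=> Hb Hb'; have [mt [e1 e2]] := product_pair HPt (le_act L xi ht ∘ t1) t2.
by apply: (le_act_inj (L := L) ev_m0_over); rewrite -(Hb mt e1 e2) (Hb' mt e1 e2).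
Qed.

Lemma ev_shift_total xi : exists beta, ev_shift xi beta.
Proof.
have [zeta Hzeta] := phi_components_exist xi.
by exists (ns_act D (ev_eq f) zeta); apply: ev_shift_phi.
Qed.

Lemma ns_curry_isoP : ns_curry_iso f <-> forall beta, exists! xi, ev_shift xi beta.
Proof.
split=> [[Phi [HPhi [g gK Kg]]] beta | Huniq].
  have Hshift xi : ev_shift xi (Phi xi).
    have [zeta [z1 z2]] := phi_components_exist xi.
    by rewrite (HPhi xi zeta z1 z2); apply: ev_shift_phi.
  exists (g beta); split=> [|xi Hxi]; first by rewrite -{2}(Kg beta).
  by rewrite -(gK xi) (ev_shift_functional (Hshift xi) Hxi).
pose Phi xi := proj1_sig (constructive_indefinite_description _ (ev_shift_total xi)).
have HPhi xi : ev_shift xi (Phi xi).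
  by rewrite /Phi; case: constructive_indefinite_description.
exists Phi; split=> [xi zeta z1 z2|].
  exact: ev_shift_functional (HPhi xi) (ev_shift_phi (conj z1 z2)).
apply: bijective_of_inj_surj => [xi xi' e | beta].
  have [x [_ Hx]] := Huniq (Phi xi).
  by rewrite -(Hx xi (HPhi xi)) (Hx xi') // e.
have [xi [Hxi _]] := Huniq beta; exists xi.
exact: ev_shift_functional (HPhi xi) Hxi.
Qed.

Lemma curries_uniqueP :
  (forall ft, fmap p ft = f -> exists! h, curries h ft) <->
  (forall beta, exists! xi, ev_shift xi beta).
Proof.
have lift_curry h ft : fmap p ft = f -> curries h ft ->
    exists xi : ns_grp D (c_curry CC f), le_act L xi ht = h.
  by move=> Hft /curries_over; rewrite Hft; apply: (le_transitive L Hht).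
split=> Hcur.
  move=> beta; have Hft := le_act_fib L beta ev_m0_over.
  have [h [Hh Hu]] := Hcur _ Hft.
  have [xi exi] := lift_curry _ _ Hft Hh.
  exists xi; split=> [|xi' Hxi']; first by rewrite /ev_shift exi.
  by apply: (le_act_inj (L := L) Hht); rewrite exi; apply: Hu.
move=> ft Hft; have [beta <-] := le_transitive L ev_m0_over Hft.
have [xi [Hxi Hu]] := Hcur beta.
exists (le_act L xi ht); split=> // h Hh.
have [xi' exi'] := lift_curry _ _ (le_act_fib L beta ev_m0_over) Hh.
by rewrite -exi' in Hh *; rewrite (Hu xi' Hh).
Qed.

End Curry.

Lemma exp_universal_atP :
  exp_universal_at t1' t2' tev t1 t2 <-> forall f, ns_curry_iso f.
Proof.
have setup f : exists ht m0t, [/\ fmap p ht = c_curry CC f,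
    t1' ∘ m0t = ht ∘ t1 & t2' ∘ m0t = t2].
  have [ht Hht] := le_full L (c_curry CC f).
  have [m0t [m01 m02]] := product_pair HPt (ht ∘ t1) t2.
  by exists ht, m0t.
split=> [Hexp f | Hiso ft].
  have [ht [m0t [Hht m01 m02]]] := setup f.
  apply/(ns_curry_isoP Hht m01 m02)/(curries_uniqueP Hht m01 m02) => ft _.
  exact: Hexp.
have [ht [m0t [Hht m01 m02]]] := setup (fmap p ft).
apply: (curries_uniqueP Hht m01 m02).2 (erefl _).
exact/(ns_curry_isoP Hht m01 m02).
Qed.

End LiftedExponential.

Section ProductsOfCCCs.
Context {O : Type} {C E : Category O} (p : IOFunctor E C).

Lemma ccc_nproduct_preserved : is_ccc E -> ccc_functor p ->
  forall n (Xs : 'I_n -> O), exists P (prt : forall k, Hom E P (Xs k)),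
    is_nproduct E Xs P prt /\ is_nproduct C Xs P (fun k => fmap p (prt k)).
Proof.
move=> [[T HT] [Hprod _]] [HpT [Hpprod _]]; elim=> [|n IH] Xs.
  exists T, (fun k : 'I_0 => False_rect _ (notF (ltn_ord k))).
  by split; apply: nproduct0_of_terminal; [exact: HT | exact: HpT].
have [R [rt [HR HRC]]] := IH (fun j => Xs (lift ord0 j)).
have [P [q1 [q2 HP]]] := Hprod (Xs ord0) R.
exists P, (cons_proj rt q1 q2); split; first exact: nproduct_cons.
have -> : (fun k => fmap p (cons_proj rt q1 q2 k)) =
          cons_proj (fun j => fmap p (rt j)) (fmap p q1) (fmap p q2).
  apply: functional_extensionality_dep => k.
  by case: (unliftP ord0 k) => [j ->|->]; rewrite ?cons_proj_lift ?cons_proj0 ?fmap_cmp.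
exact: nproduct_cons HRC (Hpprod _ _ _ _ _ HP).
Qed.

End ProductsOfCCCs.

Section CartesianClosedLift.
Context {O : Type} {C E : Category O} {D : NatSys C} {p : IOFunctor E C}
  (L : LinExt D p) (CC : CCC C).

Lemma terminal_image T : is_terminal E T -> is_terminal C T.
Proof.
move=> HT X; have [h [_ Hh]] := HT X.
exists (fmap p h); split=> // f _; have [ft <-] := le_full L f.
by rewrite (Hh ft I).
Qed.

Lemma product_image {X Y P} (q1 : Hom E P X) (q2 : Hom E P Y) :
  cartesian_ns D -> is_product E q1 q2 -> is_product C (fmap p q1) (fmap p q2).
Proof.
move=> Hcart HP.
have [ct1 Hct1] := le_full L (c_p1 CC X Y).
have [ct2 Hct2] := le_full L (c_p2 CC X Y).
have HPc := product_lift L Hcart (ccc_product CC (X := X) (Y := Y)) Hct1 Hct2.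
have [u [w [u1 u2 uw wu]]] := product_iso HP HPc.
rewrite -u1 -u2 !fmap_cmp Hct1 Hct2.
by apply: (product_transport (w := fmap p w) (ccc_product CC (X := X) (Y := Y)));
  rewrite -fmap_cmp ?uw ?wu fmap_id.
Qed.

Lemma cartesian_of_ccc_functor : is_ccc E -> ccc_functor p -> cartesian_ns D.
Proof.
move=> HE Hp n Xs P pr HC.
have [P' [prt [HE' HC']]] := ccc_nproduct_preserved HE Hp Xs.
have [u [w [Hu uw wu]]] := nproduct_iso HC HC'.
have [ut Hut] := le_full L u.
have [wt Hwt] := le_full L w.
have [wt' [wtl wtr]] := lift_invertible L Hut Hwt wu uw.
apply: (ns_cartesian_at_of_lift L HC _ (nproduct_transport HE' wtr wtl)) => k.
by rewrite fmap_cmp Hut Hu.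
Qed.

Lemma exponential_lift_transfer {Y Z Ex1 P1 Ex0 P0} (q1 : Hom E P1 Ex1)
    (q2 : Hom E P1 Y) (ev1 : Hom E P1 Z) (c1 : Hom C P0 Ex0) (c2 : Hom C P0 Y)
    (ev0 : Hom C P0 Z) (ct1 : Hom E P0 Ex0) (ct2 : Hom E P0 Y) :
  cartesian_ns D -> is_exponential E q1 q2 ev1 ->
  is_exponential C (fmap p q1) (fmap p q2) (fmap p ev1) ->
  is_exponential C c1 c2 ev0 -> fmap p ct1 = c1 -> fmap p ct2 = c2 ->
  exists evt, fmap p evt = ev0 /\ is_exponential E ct1 ct2 evt.
Proof.
move=> Hcart HE1 HC1 HC0 Hct1 Hct2.
have [u [w [m0 [uw wu m01 m02 em0]]]] := exponential_unique HC1 HC0.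
have [ut Hut] := le_full L u.
have [wt Hwt] := le_full L w.
have [wt' [wtl wtr]] := lift_invertible L Hut Hwt wu uw.
have HPt0 := product_lift L Hcart HC0.1 Hct1 Hct2.
have [mt0 [mt01 mt02]] := product_pair HE1.1 (ut ∘ ct1) ct2.
exists (ev1 ∘ mt0); split; last exact: exponential_transport HE1 HPt0 wtr wtl mt01 mt02.
rewrite fmap_cmp -em0; congr (_ ∘ _); apply: (product_hom_eq HC1.1).
  by rewrite m01 -fmap_cmp mt01 fmap_cmp Hut Hct1.
by rewrite m02 -fmap_cmp mt02 Hct2.
Qed.

Lemma canonical_exponential_lift : ccc_ns CC D -> forall Y Z,
  exists t1' t2' evt,
    [/\ fmap p t1' = c_p1 CC (c_exp CC Z Y) Y, fmap p t2' = c_p2 CC (c_exp CC Z Y) Y,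
        fmap p evt = c_ev CC Y Z & is_exponential E t1' t2' evt].
Proof.
move=> [Hcart Hiso] Y Z.
have [t1' H1'] := le_full L (c_p1 CC (c_exp CC Z Y) Y).
have [t2' H2'] := le_full L (c_p2 CC (c_exp CC Z Y) Y).
have [evt Hev] := le_full L (c_ev CC Y Z).
have HPt := product_lift L Hcart (ccc_product CC (X := c_exp CC Z Y) (Y := Y)) H1' H2'.
exists t1', t2', evt; split=> //; apply: is_exponential_of_universal_at => // X.
have [t1 H1] := le_full L (c_p1 CC X Y).
have [t2 H2] := le_full L (c_p2 CC X Y).
exists (c_prod CC X Y), t1, t2; split.
  exact: (product_lift L Hcart (ccc_product CC (X := X) (Y := Y)) H1 H2).
by apply/(exp_universal_atP L H1' H2' Hev H1 H2 HPt) => f; apply: Hiso.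
Qed.

Lemma exponential_lift {Y Z Ex P} (c1 : Hom C P Ex) (c2 : Hom C P Y)
    (ev : Hom C P Z) (ct1 : Hom E P Ex) (ct2 : Hom E P Y) :
  ccc_ns CC D -> is_exponential C c1 c2 ev -> fmap p ct1 = c1 -> fmap p ct2 = c2 ->
  exists evt, fmap p evt = ev /\ is_exponential E ct1 ct2 evt.
Proof.
move=> Hccc HC Hct1 Hct2.
have [t1' [t2' [evt [H1' H2' Hev HE]]]] := canonical_exponential_lift Hccc Y Z.
apply: (exponential_lift_transfer Hccc.1 HE _ HC Hct1 Hct2).
by rewrite H1' H2' Hev; apply: ccc_exponential.
Qed.

Lemma exponential_image {Y Z Ex P} (q1 : Hom E P Ex) (q2 : Hom E P Y)
    (ev : Hom E P Z) :
  ccc_ns CC D -> is_exponential E q1 q2 ev ->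
  is_exponential C (fmap p q1) (fmap p q2) (fmap p ev).
Proof.
move=> Hccc HE1.
have [t1' [t2' [evt [H1' H2' Hev HE0]]]] := canonical_exponential_lift Hccc Y Z.
have [u [w [m0 [uw wu m01 m02 em0]]]] := exponential_unique HE0 HE1.
have e1 : c_p1 CC (c_exp CC Z Y) Y ∘ fmap p m0 = fmap p u ∘ fmap p q1.
  by rewrite -H1' -!fmap_cmp m01.
have e2 : c_p2 CC (c_exp CC Z Y) Y ∘ fmap p m0 = fmap p q2.
  by rewrite -H2' -!fmap_cmp m02.
rewrite -em0 fmap_cmp Hev.
apply: (exponential_transport (w := fmap p w) (ccc_exponential CC Y Z) _ _ _ e1 e2).
- exact: product_image Hccc.1 HE1.1.
- by rewrite -fmap_cmp uw fmap_id.
- by rewrite -fmap_cmp wu fmap_id.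
Qed.

Lemma ns_curry_iso_of_exponential {X Y Z Ex P} (q1 : Hom E P Ex)
    (q2 : Hom E P Y) (ev : Hom E P Z) (f : Hom C (c_prod CC X Y) Z) :
  cartesian_ns D -> is_exponential E q1 q2 ev ->
  is_exponential C (fmap p q1) (fmap p q2) (fmap p ev) -> ns_curry_iso (D := D) f.
Proof.
move=> Hcart HE HC.
have [t1' H1'] := le_full L (c_p1 CC (c_exp CC Z Y) Y).
have [t2' H2'] := le_full L (c_p2 CC (c_exp CC Z Y) Y).
have [evt [Hev [HPt Hexp]]] :=
  exponential_lift_transfer Hcart HE HC (ccc_exponential CC Y Z) H1' H2'.
have [t1 H1] := le_full L (c_p1 CC X Y).
have [t2 H2] := le_full L (c_p2 CC X Y).
apply: (exp_universal_atP L H1' H2' Hev H1 H2 HPt).1; apply: Hexp.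
exact: (product_lift L Hcart (ccc_product CC (X := X) (Y := Y)) H1 H2).
Qed.

Lemma is_ccc_lift : ccc_ns CC D -> is_ccc E.
Proof.
move=> Hccc; have Hcart := Hccc.1; split.
  exists (c_one CC); exact: (terminal_lift L Hcart (ccc_terminal CC)).
split=> [X Y | Y Z].
  have [t1 H1] := le_full L (c_p1 CC X Y).
  have [t2 H2] := le_full L (c_p2 CC X Y).
  exists (c_prod CC X Y), t1, t2.
  exact: (product_lift L Hcart (ccc_product CC (X := X) (Y := Y)) H1 H2).
have [t1' [t2' [evt [_ _ _ HE]]]] := canonical_exponential_lift Hccc Y Z.
by exists (c_exp CC Z Y), (c_prod CC (c_exp CC Z Y) Y), t1', t2', evt.
Qed.

Lemma ccc_functor_lift : ccc_ns CC D -> ccc_functor p.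
Proof.
move=> Hccc; split; first exact: terminal_image.
split=> [X Y P q1 q2 | Y Z Ex P q1 q2 ev]; first exact: product_image Hccc.1.
exact: exponential_image.
Qed.

Lemma ccc_ns_of_ccc_functor : is_ccc E -> ccc_functor p -> ccc_ns CC D.
Proof.
move=> HE Hp; have Hcart := cartesian_of_ccc_functor HE Hp.
split=> // X Y Z f; have [Ex [P [q1 [q2 [ev HEx]]]]] := HE.2.2 Y Z.
exact: ns_curry_iso_of_exponential Hcart HEx (Hp.2.2 _ _ _ _ _ _ _ HEx).
Qed.

Lemma ccc_nsP : ccc_ns CC D <-> is_ccc E /\ ccc_functor p.
Proof.
split=> [Hccc | [HE Hp]]; last exact: ccc_ns_of_ccc_functor.
by split; [apply: is_ccc_lift | apply: ccc_functor_lift].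
Qed.

End CartesianClosedLift.

(** * Interpreting the free cartesian closed category *)

Section SortedCCCFacts.
Context {S : Type} {K : Category (BiMag S)}
  (iota : forall X Y : BiMag S, Tm X Y -> Hom K X Y) (Hs : sorted_ccc iota).

Lemma sorted_ccc_pair1 Z X Y (t : Tm Z X) (u : Tm Z Y) :
  iota (tp1 X Y) ∘ iota (tpair t u) = iota t.
Proof. by case: Hs => [Hteq [_ [Hcmp _]]]; rewrite -Hcmp (Hteq _ _ _ _ (teq_p1 t u)). Qed.

Lemma sorted_ccc_pair2 Z X Y (t : Tm Z X) (u : Tm Z Y) :
  iota (tp2 X Y) ∘ iota (tpair t u) = iota u.
Proof. by case: Hs => [Hteq [_ [Hcmp _]]]; rewrite -Hcmp (Hteq _ _ _ _ (teq_p2 t u)). Qed.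

Lemma sorted_ccc_curry X Y Z (t : Tm (bprod X Y) Z) m :
  iota (tp1 (bexp Z Y) Y) ∘ m = iota (tcurry t) ∘ iota (tp1 X Y) ->
  iota (tp2 (bexp Z Y) Y) ∘ m = iota (tp2 X Y) ->
  iota (tev Y Z) ∘ m = iota t.
Proof.
case: Hs => [Hteq [_ [Hcmp [_ [HP _]]]]] e1 e2.
have -> : m = iota (tpair (tcmp (tcurry t) (tp1 X Y)) (tp2 X Y)).
  by apply: (product_hom_eq (HP _ _)); rewrite ?sorted_ccc_pair1 ?sorted_ccc_pair2 ?Hcmp.
by rewrite -Hcmp (Hteq _ _ _ _ (teq_beta t)).
Qed.

End SortedCCCFacts.

Section SortedCCCUnique.
Context {S : Type} {K : Category (BiMag S)}
  (iota1 iota2 : forall X Y : BiMag S, Tm X Y -> Hom K X Y).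
Hypotheses (Hs1 : sorted_ccc iota1) (Hs2 : sorted_ccc iota2)
  (Hp1 : forall X Y, iota1 (tp1 X Y) = iota2 (tp1 X Y))
  (Hp2 : forall X Y, iota1 (tp2 X Y) = iota2 (tp2 X Y))
  (Hev : forall Y Z, iota1 (tev Y Z) = iota2 (tev Y Z)).

Lemma sorted_ccc_unique X Y (t : Tm X Y) : iota1 t = iota2 t.
Proof.
have [_ [Hid1 [Hcmp1 _]]] := Hs1.
have [_ [Hid2 [Hcmp2 [HT [HP HE]]]]] := Hs2.
elim: X Y / t => [X|X Y Z t IHt u IHu|X|X Y|X Y|Z X Y t IHt u IHu|Y Z|X Y Z t IHt].
- by rewrite Hid1 Hid2.
- by rewrite Hcmp1 Hcmp2 IHt IHu.
- have [h [_ Hh]] := HT X.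
  by rewrite -(Hh (iota1 (tbang X)) I) -(Hh (iota2 (tbang X)) I).
- exact: Hp1.
- exact: Hp2.
- apply: (product_hom_eq (HP X Y)).
    by rewrite -{1}Hp1 (sorted_ccc_pair1 Hs1) (sorted_ccc_pair1 Hs2) IHt.
  by rewrite -{1}Hp2 (sorted_ccc_pair2 Hs1) (sorted_ccc_pair2 Hs2) IHu.
- exact: Hev.
- have [h [_ Hh]] := (HE Y Z).2 X _ _ _ (HP X Y) (iota2 t).
  rewrite -(Hh (iota2 (tcurry t))); last exact: (sorted_ccc_curry Hs2).
  apply/esym/Hh => m e1 e2; rewrite -Hev -IHt.
  by apply: (sorted_ccc_curry Hs1); rewrite ?Hp1 ?Hp2.
Qed.

End SortedCCCUnique.

Section FreeInterpretation.
Context {S : Type} (K : Category (BiMag S))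
  (pi1 : forall X Y : BiMag S, Hom K (bprod X Y) X)
  (pi2 : forall X Y : BiMag S, Hom K (bprod X Y) Y)
  (ev : forall Y Z : BiMag S, Hom K (bprod (bexp Z Y) Y) Z).
Hypotheses (HT : is_terminal K bone) (HP : forall X Y, is_product K (pi1 X Y) (pi2 X Y))
  (HE : forall Y Z, is_exponential K (pi1 (bexp Z Y) Y) (pi2 (bexp Z Y) Y) (ev Y Z)).

Definition bang X : Hom K X bone :=
  proj1_sig (constructive_indefinite_description _ (HT X)).

Lemma bang_unique X (f : Hom K X bone) : f = bang X.
Proof.
by rewrite /bang; case: constructive_indefinite_description => b /= [_ /(_ f I)].
Qed.

Definition pair Z X Y (f : Hom K Z X) (g : Hom K Z Y) : Hom K Z (bprod X Y) :=
  proj1_sig (constructive_indefinite_description _ (product_pair (@HP X Y) f g)).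

Lemma pairP Z X Y (f : Hom K Z X) (g : Hom K Z Y) :
  pi1 X Y ∘ pair f g = f /\ pi2 X Y ∘ pair f g = g.
Proof. by rewrite /pair; case: constructive_indefinite_description. Qed.

Definition curry X Y Z (f : Hom K (bprod X Y) Z) : Hom K X (bexp Z Y) :=
  proj1_sig (constructive_indefinite_description _ ((HE Y Z).2 X _ _ _ (@HP X Y) f)).

Lemma curryP X Y Z (f : Hom K (bprod X Y) Z) :
  (forall m, pi1 _ _ ∘ m = curry f ∘ pi1 X Y -> pi2 _ _ ∘ m = pi2 X Y ->
     ev Y Z ∘ m = f) /\
  (forall h, (forall m, pi1 _ _ ∘ m = h ∘ pi1 X Y -> pi2 _ _ ∘ m = pi2 X Y ->
     ev Y Z ∘ m = f) -> curry f = h).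
Proof. by rewrite /curry; case: constructive_indefinite_description. Qed.

Fixpoint interp {X Y} (t : Tm X Y) : Hom K X Y :=
  match t with
  | tid X => cid K X
  | tcmp _ _ _ t u => interp t ∘ interp u
  | tbang X => bang X
  | tp1 X Y => pi1 X Y
  | tp2 X Y => pi2 X Y
  | tpair _ _ _ t u => pair (interp t) (interp u)
  | tev Y Z => ev Y Z
  | tcurry _ _ _ t => curry (interp t)
  end.

Lemma interp_teq X Y (t u : Tm X Y) : teq t u -> interp t = interp u.
Proof.
have pair_eq Z X' Y' (h h' : Hom K Z (bprod X' Y')) :
    pi1 _ _ ∘ h = pi1 _ _ ∘ h' -> pi2 _ _ ∘ h = pi2 _ _ ∘ h' -> h = h'.
  exact: product_hom_eq (@HP X' Y') Z h h'.
elim=> {X Y t u} /=.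
- by [].
- by move=> X Y t u _ ->.
- by move=> X Y t u v _ -> _ ->.
- by move=> X Y Z t t' u u' _ -> _ ->.
- by move=> Z X Y t t' u u' _ -> _ ->.
- by move=> X Y Z t t' _ ->.
- by move=> X Y t; rewrite cmp_id_l.
- by move=> X Y t; rewrite cmp_id_r.
- by move=> X Y Z W h g f; rewrite cmp_assoc.
- by move=> X t; rewrite (bang_unique (interp t)).
- by move=> Z X Y t u; rewrite (pairP _ _).1.
- by move=> Z X Y t u; rewrite (pairP _ _).2.
- by move=> Z X Y h; apply: pair_eq; rewrite ?(pairP _ _).1 ?(pairP _ _).2.
- by move=> X Y Z t; apply: (curryP _).1; rewrite ?(pairP _ _).1 ?(pairP _ _).2.
- move=> X Y Z h; apply: (curryP _).2 => m e1 e2; congr (_ ∘ _).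
  by apply: pair_eq; rewrite ?(pairP _ _).1 ?(pairP _ _).2.
Qed.

Lemma interp_sorted_ccc : sorted_ccc (fun X Y (t : Tm X Y) => interp t).
Proof. by split; [exact: interp_teq | do 4?split]. Qed.

End FreeInterpretation.

Section SortedLift.
Context {S : Type} {C E : Category (BiMag S)} {D : NatSys C} {p : IOFunctor E C}
  (L : LinExt D p) (CC : CCC C).

Lemma sorted_ccc_fmap (iotat : forall X Y : BiMag S, Tm X Y -> Hom E X Y)
    (iota : forall X Y : BiMag S, Tm X Y -> Hom C X Y) :
  sorted_ccc iotat -> sorted_ccc iota ->
  (forall X Y, fmap p (iotat _ _ (tp1 X Y)) = iota _ _ (tp1 X Y)) ->
  (forall X Y, fmap p (iotat _ _ (tp2 X Y)) = iota _ _ (tp2 X Y)) ->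
  (forall Y Z, fmap p (iotat _ _ (tev Y Z)) = iota _ _ (tev Y Z)) ->
  sorted_ccc (fun X Y t => fmap p (iotat X Y t)).
Proof.
move=> [Hteq [Hid [Hcmp _]]] [_ [_ [_ [HT [HP HE]]]]] Hp1 Hp2 Hev.
split=> [X Y t u /Hteq -> //|]; split=> [X|]; first by rewrite Hid fmap_id.
split=> [X Y Z t u|]; first by rewrite Hcmp fmap_cmp.
by split=> //; split=> [X Y|Y Z]; rewrite ?Hp1 ?Hp2 ?Hev.
Qed.

Definition lift_hom {X Y} (f : Hom C X Y) : Hom E X Y :=
  proj1_sig (constructive_indefinite_description _ (le_full L f)).

Lemma lift_homK X Y (f : Hom C X Y) : fmap p (lift_hom f) = f.
Proof. exact: proj2_sig (constructive_indefinite_description _ (le_full L f)). Qed.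

Lemma sorted_ccc_lift (iota : forall X Y : BiMag S, Tm X Y -> Hom C X Y) :
  ccc_ns CC D -> sorted_ccc iota ->
  exists iotat : forall X Y : BiMag S, Tm X Y -> Hom E X Y,
    sorted_ccc iotat /\ (forall X Y (t : Tm X Y), fmap p (iotat X Y t) = iota X Y t).
Proof.
move=> Hccc Hs; have [_ [_ [_ [HT [HP HE]]]]] := Hs.
pose pi1 X Y := lift_hom (iota _ _ (tp1 X Y)).
pose pi2 X Y := lift_hom (iota _ _ (tp2 X Y)).
have HPt X Y : is_product E (pi1 X Y) (pi2 X Y).
  exact: (product_lift L Hccc.1 (HP X Y) (lift_homK _) (lift_homK _)).
have Hexp Y Z : exists evt, fmap p evt = iota _ _ (tev Y Z) /\
    is_exponential E (pi1 (bexp Z Y) Y) (pi2 (bexp Z Y) Y) evt.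
  exact: (exponential_lift L Hccc (HE Y Z) (lift_homK _) (lift_homK _)).
pose evt Y Z := proj1_sig (constructive_indefinite_description _ (Hexp Y Z)).
have [Hevt HEt] : (forall Y Z, fmap p (evt Y Z) = iota _ _ (tev Y Z)) /\
    (forall Y Z, is_exponential E (pi1 (bexp Z Y) Y) (pi2 (bexp Z Y) Y) (evt Y Z)).
  by split=> Y Z; rewrite /evt; case: constructive_indefinite_description => ? [].
have HTt := terminal_lift L Hccc.1 HT.
pose iotat X Y (t : Tm X Y) := interp HTt HPt HEt t.
have Hst : sorted_ccc iotat := interp_sorted_ccc HTt HPt HEt.
have Hp1 X Y : fmap p (iotat _ _ (tp1 X Y)) = iota _ _ (tp1 X Y) := lift_homK _.
have Hp2 X Y : fmap p (iotat _ _ (tp2 X Y)) = iota _ _ (tp2 X Y) := lift_homK _.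
have Hev Y Z : fmap p (iotat _ _ (tev Y Z)) = iota _ _ (tev Y Z) := Hevt Y Z.
exists iotat; split=> // X Y t.
exact: (sorted_ccc_unique (sorted_ccc_fmap Hst Hs Hp1 Hp2 Hev) Hs Hp1 Hp2 Hev).
Qed.

End SortedLift.

Theorem mainTheorem3 :
  (forall (O : Type) (C : Category O) (CC : CCC C) (D : NatSys C)
          (E : Category O) (p : IOFunctor E C) (L : LinExt D p),
      ccc_ns CC D <-> (is_ccc E /\ ccc_functor p)) /\
  (forall (S : Type) (C : Category (BiMag S)) (CC : CCC C) (D : NatSys C)
          (E : Category (BiMag S)) (p : IOFunctor E C) (L : LinExt D p),
      ccc_ns CC D ->
      forall iota : forall X Y : BiMag S, Tm X Y -> Hom C X Y,
        sorted_ccc iota ->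
        exists iotat : forall X Y : BiMag S, Tm X Y -> Hom E X Y,
          sorted_ccc iotat /\
          (forall X Y (t : Tm X Y), fmap p (iotat X Y t) = iota X Y t)).
Proof.
split=> [O C CC D E p L | S C CC D E p L Hccc iota Hs].
  exact: ccc_nsP L CC.
exact: sorted_ccc_lift L CC iota Hccc Hs.
Qed.
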